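(* Let $(\Omega,+)$ be a group and $a,b$ subgroups. Then for $x,z\in a^\top$ and $y\in{}^\top b$ one has $\Gamma(x,a,y,b,z)\in a^\top$, and for $x,z\in{}^\top b$ and $y\in a^\top$ one has $\Gamma(x,a,y,b,z)\in{}^\top b$. That is, the maps $\Pi^+_{ab}:a^\top\times{}^\top b\times a^\top\to a^\top$ and $\Pi^-_{ab}:{}^\top b\times a^\top\times{}^\top b\to{}^\top b$, both given by $(x,y,z)\mapsto\Gamma(x,a,y,b,z)$, are well-defined.
   Context: $(\Omega,+)$ is a group written additively but not necessarily abelian. For subsets $x,y$, $x\top y$ means every $\omega$ has a unique decomposition $\omega=\xi+\eta$ with $\xi\in x,\eta\in y$; $a^\top=\{x\subseteq\Omega: a\top x\}$, ${}^\top b=\{x\subseteq\Omega: x\top b\}$. $\Gamma(x,a,y,b,z)=\{\omega:\exists\alpha\in a,\beta\in b:\ \alpha+\omega+\beta\in y,\ \alpha+\omega\in z,\ \omega+\beta\in x\}$. *)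

Definition is_group {T : Type} (add : T -> T -> T) (zero : T) (opp : T -> T) : Prop :=
  (forall x y z, add (add x y) z = add x (add y z)) /\
  (forall x, add zero x = x) /\ (forall x, add x zero = x) /\
  (forall x, add (opp x) x = zero) /\ (forall x, add x (opp x) = zero).

Definition is_subgroup {T : Type} (add : T -> T -> T) (zero : T) (opp : T -> T)
  (a : T -> Prop) : Prop :=
  a zero /\ (forall x y, a x -> a y -> a (add x y)) /\ (forall x, a x -> a (opp x)).

Definition top {T : Type} (add : T -> T -> T) (x y : T -> Prop) : Prop :=
  forall w : T,
    (exists xi eta, x xi /\ y eta /\ w = add xi eta) /\
    (forall xi eta xi' eta', x xi -> y eta -> x xi' -> y eta' ->
       w = add xi eta -> w = add xi' eta' -> xi = xi' /\ eta = eta').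

(* x ∈ a^⊤  iff  a ⊤ x ;   x ∈ ^⊤b  iff  x ⊤ b *)
Definition top_right {T : Type} (add : T -> T -> T) (a x : T -> Prop) : Prop := top add a x.
Definition top_left {T : Type} (add : T -> T -> T) (b x : T -> Prop) : Prop := top add x b.

Definition Gamma {T : Type} (add : T -> T -> T) (x a y b z : T -> Prop) : T -> Prop :=
  fun w => exists al be, a al /\ b be /\
    y (add (add al w) be) /\ z (add al w) /\ x (add w be).


Set Implicit Arguments.

(* [a ⊤ x] means that [x] meets every right coset [a + w] in exactly one point.
   For [z ∈ a^⊤] and [y ∈ ^⊤b], the conditions defining [Γ] then pin down, on a
   coset [a + w], first the point [α + ω] of [z], next [β] through [y], and
   finally [ω + β] as the point of [x] on the coset [a + (α + ω + β)]; so [Γ]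
   meets [a + w] exactly once. The statement for [^⊤b] is the same one read
   in the opposite group [u +' v := v + u], which exchanges the roles of [a]
   and [b] and of [x] and [z]. *)

Definition opposite {T : Type} (add : T -> T -> T) (u v : T) : T := add v u.

Definition right_transversal {T : Type} (add : T -> T -> T) (a x : T -> Prop) : Prop :=
  forall w, (exists al, a al /\ x (add al w)) /\
    (forall al al', a al -> a al' -> x (add al w) -> x (add al' w) -> al = al').

Section Group.

Variables (T : Type) (add : T -> T -> T) (zero : T) (opp : T -> T).
Hypothesis add_group : is_group add zero opp.

Local Infix "+" := add.
Local Notation "- u" := (opp u).

Lemma addA (u v w : T) : u + v + w = u + (v + w).
Proof. apply add_group. Qed.

Lemma addKl (u v : T) : - u + (u + v) = v.
Proof.
  destruct add_group as [assoc [add0 [_ [addNx _]]]].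
  rewrite <- assoc, addNx, add0; reflexivity.
Qed.

Lemma addNKl (u v : T) : u + (- u + v) = v.
Proof.
  destruct add_group as [assoc [add0 [_ [_ addxN]]]].
  rewrite <- assoc, addxN, add0; reflexivity.
Qed.

Lemma addNx (u : T) : - u + u = zero.
Proof. apply add_group. Qed.

Lemma addIl (u v v' : T) : u + v = u + v' -> v = v'.
Proof. intros E; rewrite <- (addKl u v), E, addKl; reflexivity. Qed.

Lemma oppI (u v : T) : - u = - v -> u = v.
Proof.
  intros E; apply addIl with (u := - u).
  rewrite addNx, E, addNx; reflexivity.
Qed.

Ltac group := repeat rewrite ?addA, ?addKl, ?addNKl; reflexivity.

Lemma top_right_transversal (a x : T -> Prop) :
  is_subgroup add zero opp a -> top add a x <-> right_transversal add a x.
Proof.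
  intros [_ [_ aN]]; split.
  - intros Hx w; split.
    + destruct (Hx w) as [[xi [eta [Hxi [Heta ->]]]] _].
      exists (- xi); split; [auto | rewrite addKl; exact Heta].
    + intros al al' Hal Hal' H H'.
      apply oppI.
      apply (proj2 (Hx w) (- al) (al + w) (- al') (al' + w)); auto; symmetry; group.
  - intros Hx w; split.
    + destruct (proj1 (Hx w)) as [al [Hal H]].
      exists (- al), (al + w); split; [auto | split; [exact H | symmetry; group]].
    + intros xi eta xi' eta' Hxi Heta Hxi' Heta' -> E.
      rewrite <- (addKl xi eta) in Heta; rewrite <- (addKl xi' eta') in Heta'.
      rewrite <- E in Heta'.
      assert (Exi : xi = xi') by (apply oppI, (proj2 (Hx (xi + eta))); auto).
      subst xi'; split; [reflexivity | exact (addIl E)].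
Qed.

(* The hypothesis on [y] is [y ⊤ b], read in the opposite group. *)
Lemma Gamma_right_transversal (a b x y z : T -> Prop) :
  is_subgroup add zero opp a ->
  right_transversal add a x -> right_transversal (opposite add) b y ->
  right_transversal add a z -> right_transversal add a (Gamma add x a y b z).
Proof.
  unfold right_transversal, opposite; intros [_ [aD aN]] Hx Hy Hz w; split.
  - destruct (proj1 (Hz w)) as [al0 [Hal0 Hz0]].
    destruct (proj1 (Hy (al0 + w))) as [be [Hbe Hy0]].
    destruct (proj1 (Hx (al0 + w + be))) as [al1 [Hal1 Hx0]].
    exists (al1 + al0); split; [auto |].
    exists (- al1), be; repeat split; auto.
    + replace (- al1 + (al1 + al0 + w) + be) with (al0 + w + be) by group; exact Hy0.
    + replace (- al1 + (al1 + al0 + w)) with (al0 + w) by group; exact Hz0.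
    + replace (al1 + al0 + w + be) with (al1 + (al0 + w + be)) by group; exact Hx0.
  - intros ga ga' Hga Hga' [al [be [Hal [Hbe [Hy1 [Hz1 Hx1]]]]]]
                           [al' [be' [Hal' [Hbe' [Hy2 [Hz2 Hx2]]]]]].
    rewrite <- addA in Hz1, Hz2, Hy1, Hy2.
    assert (Ez : al + ga = al' + ga') by (apply (proj2 (Hz w)); auto).
    rewrite Ez in Hy1.
    assert (Ey : be = be') by (apply (proj2 (Hy (al' + ga' + w))); auto).
    subst be'.
    replace (ga + w + be) with (- al + (al + ga + w + be)) in Hx1 by group.
    replace (ga' + w + be) with (- al' + (al' + ga' + w + be)) in Hx2 by group.
    rewrite Ez in Hx1.
    assert (Ex : al = al') by (apply oppI, (proj2 (Hx (al' + ga' + w + be))); auto).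
    subst al'; exact (addIl Ez).
Qed.

End Group.

Lemma is_group_opposite (T : Type) (add : T -> T -> T) (zero : T) (opp : T -> T) :
  is_group add zero opp -> is_group (opposite add) zero opp.
Proof.
  unfold is_group, opposite; intros [assoc inverses].
  repeat split; try apply inverses; intros; symmetry; apply assoc.
Qed.

Lemma is_subgroup_opposite (T : Type) (add : T -> T -> T) (zero : T) (opp : T -> T)
  (a : T -> Prop) :
  is_subgroup add zero opp a -> is_subgroup (opposite add) zero opp a.
Proof. unfold is_subgroup, opposite; intros [a0 [aD aN]]; auto. Qed.

Lemma top_opposite (T : Type) (add : T -> T -> T) (x y : T -> Prop) :
  top (opposite add) x y <-> top add y x.
Proof.
  unfold top, opposite; split; intros H w; split.
  - destruct (proj1 (H w)) as [xi [eta [Hxi [Heta E]]]]; exists eta, xi; auto.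
  - intros xi eta xi' eta' ? ? ? ? ? ?.
    destruct (proj2 (H w) eta xi eta' xi'); auto.
  - destruct (proj1 (H w)) as [xi [eta [Hxi [Heta E]]]]; exists eta, xi; auto.
  - intros xi eta xi' eta' ? ? ? ? ? ?.
    destruct (proj2 (H w) eta xi eta' xi'); auto.
Qed.

Lemma top_ext_l (T : Type) (add : T -> T -> T) (x x' y : T -> Prop) :
  (forall w, x w <-> x' w) -> top add x y -> top add x' y.
Proof.
  intros Exx' H w; split.
  - destruct (proj1 (H w)) as [xi [eta [Hxi [Heta E]]]].
    exists xi, eta; split; [apply Exx'; exact Hxi | auto].
  - intros xi eta xi' eta' Hxi Heta Hxi' Heta'.
    apply (proj2 (H w)); [apply Exx' | | apply Exx' |]; assumption.
Qed.

Lemma Gamma_opposite (T : Type) (add : T -> T -> T) (zero : T) (opp : T -> T)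
  (a b x y z : T -> Prop) :
  is_group add zero opp ->
  forall w, Gamma (opposite add) z b y a x w <-> Gamma add x a y b z w.
Proof.
  unfold Gamma, opposite; intros [assoc _] w.
  split; intros [al [be [Hal [Hbe [H1 [H2 H3]]]]]]; exists be, al;
    rewrite assoc in *; auto.
Qed.

Lemma Gamma_top_right (T : Type) (add : T -> T -> T) (zero : T) (opp : T -> T)
  (a b x y z : T -> Prop) :
  is_group add zero opp -> is_subgroup add zero opp a -> is_subgroup add zero opp b ->
  top add a x -> top add y b -> top add a z -> top add a (Gamma add x a y b z).
Proof.
  intros Hgrp Ha Hb Hx Hy Hz.
  apply (top_right_transversal Hgrp _ Ha).
  apply (Gamma_right_transversal Hgrp); auto.
  - apply (top_right_transversal Hgrp _ Ha); exact Hx.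
  - apply (top_right_transversal (is_group_opposite Hgrp) _ (is_subgroup_opposite Hb)).
    apply top_opposite; exact Hy.
  - apply (top_right_transversal Hgrp _ Ha); exact Hz.
Qed.

Lemma Gamma_top_left (T : Type) (add : T -> T -> T) (zero : T) (opp : T -> T)
  (a b x y z : T -> Prop) :
  is_group add zero opp -> is_subgroup add zero opp a -> is_subgroup add zero opp b ->
  top add x b -> top add a y -> top add z b -> top add (Gamma add x a y b z) b.
Proof.
  intros Hgrp Ha Hb Hx Hy Hz.
  apply (top_ext_l _ (Gamma_opposite a b x y z Hgrp)).
  apply top_opposite.
  apply (Gamma_top_right (is_group_opposite Hgrp)
           (is_subgroup_opposite Hb) (is_subgroup_opposite Ha));
    apply top_opposite; assumption.
Qed.

Theorem theorem7p1 (T : Type) (add : T -> T -> T) (zero : T) (opp : T -> T)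
  (a b : T -> Prop) :
  is_group add zero opp ->
  is_subgroup add zero opp a -> is_subgroup add zero opp b ->
  (forall x y z : T -> Prop,
     top_right add a x -> top_left add b y -> top_right add a z ->
     top_right add a (Gamma add x a y b z)) /\
  (forall x y z : T -> Prop,
     top_left add b x -> top_right add a y -> top_left add b z ->
     top_left add b (Gamma add x a y b z)).
Proof.
  intros Hgrp Ha Hb; split; intros x y z.
  - exact (Gamma_top_right Hgrp Ha Hb).
  - exact (Gamma_top_left Hgrp Ha Hb).
Qed.
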